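(* Let $K$ be a field of characteristic $\neq 2$, $n\ge1$, and let $\mathcal C$ be an EACP over $K$ with natural basis $\{h_1,\dots,h_n,r\}$ and structural constants $a_{ij},b_i$, and suppose $\det(a_{ij})_{i,j=1}^n\neq0$. Then $\mathcal C$ is centroidal: every $K$-linear map $T:\mathcal C\to\mathcal C$ with $TL_x=L_xT$ and $TR_x=R_xT$ for all $x\in\mathcal C$ (where $L_x(y)=xy$, $R_x(y)=yx$) is a scalar multiple of the identity, so that the centroid $\Gamma(\mathcal C)$ is isomorphic to $K$.
   Context: An EACP over a field $K$ (characteristic $\neq 2$) is a $K$-algebra $\mathcal C$ with a basis $\{h_1,\dots,h_n,r\}$ (called a natural basis) whose multiplication is determined by bilinearity from $$h_ir=rh_i=\tfrac12\Big(\sum_{j=1}^n a_{ij}h_j+b_ir\Big),\qquad h_ih_j=0\ (i,j=1,\dots,n),\qquad rr=0,$$ for some constants $a_{ij},b_i\in K$. The centroid $\Gamma(\mathcal A)$ of an algebra $\mathcal A$ is the set of linear maps $T:\mathcal A\to\mathcal A$ commuting with all left and right multiplication operators; $\mathcal A$ is centroidal if $\Gamma(\mathcal A)\cong K$. *)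

From HB Require Import structures.
From mathcomp Require Import all_boot all_order all_algebra.
Set Implicit Arguments. Unset Strict Implicit. Unset Printing Implicit Defensive.
Import GRing.Theory.
Local Open Scope ring_scope.

(* An EACP of dimension n+1 over K, with natural basis h_1..h_n, r. *)

Section EACP.
Variables (K : fieldType) (n : nat).
Variables (a : 'M[K]_n) (b : 'rV[K]_n).

Definition hidx (i : 'I_n) : 'I_n.+1 := lift ord_max i.
Definition ridx : 'I_n.+1 := ord_max.

Definition bvec (k : 'I_n.+1) : 'rV[K]_n.+1 := delta_mx 0 k.

(* h_i r = r h_i = 1/2 (sum_j a_ij h_j + b_i r) *)
Definition hr (i : 'I_n) : 'rV[K]_n.+1 :=
  2^-1 *: (\sum_(j < n) a i j *: bvec (hidx j) + b 0 i *: bvec ridx).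

Definition eacp_bmul (k l : 'I_n.+1) : 'rV[K]_n.+1 :=
  match unlift ridx k, unlift ridx l with
  | Some i, None => hr i
  | None, Some i => hr i
  | _, _ => 0
  end.

Definition eacp_mul (x y : 'rV[K]_n.+1) : 'rV[K]_n.+1 :=
  \sum_(k < n.+1) \sum_(l < n.+1) (x 0 k * y 0 l) *: eacp_bmul k l.

End EACP.

(* As 2 and det a are
   invertible, the vectors h_i r are linearly independent: their
   h-coordinates are the rows of a / 2.  So if T commutes with left
   multiplications, comparing T (x y) with x T(y) for (x, y) = (r, r),
   (h_i0, h_i), (h_i, r), (r, h_i) in turn shows that T r has no h-component,
   T h_i has no r-component (this needs some h_i0, i.e. n > 0),
   T (h_i r) = s h_i r for s the r-coordinate of T r, and finally T h_i = s h_i. *)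

From mathcomp Require Import all_boot all_order all_algebra.
Import GRing.Theory.
Local Open Scope ring_scope.

Lemma linear_scalar_on_basis (R : comNzRingType) (m : nat)
    (T : {linear 'rV[R]_m -> 'rV[R]_m}) (s : R) :
  (forall k, T (delta_mx 0 k) = s *: delta_mx 0 k) -> forall v, T v = s *: v.
Proof.
move=> Tbasis v; rewrite [v]row_sum_delta linear_sum scaler_sumr.
by apply: eq_bigr => k _; rewrite linearZ /= Tbasis !scalerA mulrC.
Qed.

Section EACPProducts.
Variables (K : fieldType) (n : nat) (a : 'M[K]_n) (b : 'rV[K]_n).
Local Notation h i := (bvec K (hidx i)).
Local Notation r := (bvec K (ridx n)).
Local Notation mul := (eacp_mul a b).

Lemma bvecE (k l : 'I_n.+1) : bvec K k 0 l = (l == k)%:R.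
Proof. by rewrite /bvec mxE eqxx. Qed.

Lemma bvec_hh (i j : 'I_n) : h i 0 (hidx j) = (j == i)%:R.
Proof. by rewrite bvecE (inj_eq (@lift_inj _ ord_max)). Qed.

Lemma bvec_hr (i : 'I_n) : h i 0 (ridx n) = 0.
Proof. by rewrite bvecE (negbTE (neq_lift _ _)). Qed.

Lemma bvec_rh (i : 'I_n) : r 0 (hidx i) = 0.
Proof. by rewrite bvecE eq_sym (negbTE (neq_lift _ _)). Qed.

Lemma bvec_rr : r 0 (ridx n) = 1.
Proof. by rewrite bvecE eqxx. Qed.

Lemma eacp_mul_bvecl k y : mul (bvec K k) y = \sum_l y 0 l *: eacp_bmul a b k l.
Proof.
rewrite /eacp_mul (bigD1 k) //= [X in _ + X]big1 ?addr0.
  by apply: eq_bigr => l _; rewrite bvecE eqxx mul1r.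
move=> k' /negbTE k'k; apply: big1 => l _.
by rewrite bvecE k'k mul0r scale0r.
Qed.

Lemma eacp_mul_rl y : mul r y = \sum_i y 0 (hidx i) *: hr a b i.
Proof.
rewrite eacp_mul_bvecl (bigD1_ord (ridx n)) //= {1}/eacp_bmul unlift_none.
by rewrite scaler0 add0r; apply: eq_bigr => i _; rewrite /eacp_bmul unlift_none liftK.
Qed.

Lemma eacp_mul_hl i y : mul (h i) y = y 0 (ridx n) *: hr a b i.
Proof.
rewrite eacp_mul_bvecl (bigD1_ord (ridx n)) //= {1}/eacp_bmul unlift_none liftK.
by rewrite big1 ?addr0 // => j _; rewrite /eacp_bmul /ridx !liftK scaler0.
Qed.

Lemma hr_hcoord (i k : 'I_n) : hr a b i 0 (hidx k) = 2^-1 * a i k.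
Proof.
rewrite /hr mxE mxE summxE mxE bvec_rh mulr0 addr0; congr (_ * _).
under eq_bigr do rewrite mxE bvec_hh.
rewrite (bigD1 k) //= eqxx mulr1 big1 ?addr0 // => j /negbTE jk.
by rewrite eq_sym jk mulr0.
Qed.

Lemma sum_delta_scale (F : 'I_n -> 'rV[K]_n.+1) i :
  \sum_j (j == i)%:R *: F j = F i.
Proof.
rewrite (bigD1 i) //= eqxx scale1r big1 ?addr0 // => j /negbTE ->.
by rewrite scale0r.
Qed.

Lemma hr_free (c : 'I_n -> K) : (2%:R : K) != 0 -> \det a != 0 ->
  \sum_i c i *: hr a b i = 0 -> forall i, c i = 0.
Proof.
move=> two_neq0 deta_neq0 comb0 i.
have ca0 : \row_j c j *m a = 0.
  apply/rowP => k; have := congr1 (fun v : 'rV_n.+1 => 2%:R * v 0 (hidx k)) comb0.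
  rewrite /= mxE mulr0 summxE mulr_sumr => sum0.
  rewrite [RHS]mxE -[RHS]sum0 mxE.
  by apply: eq_bigr => j _; rewrite mxE [X in _ = _ * X]mxE hr_hcoord mulrCA mulVKf.
have a_unit : a \in unitmx by rewrite unitmxE unitfE.
by have /rowP/(_ i) := congr1 (mulmx^~ (invmx a)) ca0; rewrite mulmxK // mul0mx !mxE.
Qed.

Lemma hr_neq0 i : (2%:R : K) != 0 -> \det a != 0 -> hr a b i != 0.
Proof.
move=> two_neq0 deta_neq0; apply/eqP => hr0.
have := @hr_free (fun j => (j == i)%:R) two_neq0 deta_neq0.
by rewrite sum_delta_scale => /(_ hr0 i)/eqP; rewrite eqxx oner_eq0.
Qed.

Section LeftCentroid.
Hypotheses (two_neq0 : (2%:R : K) != 0) (deta_neq0 : \det a != 0).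
Variable T : {linear 'rV[K]_n.+1 -> 'rV[K]_n.+1}.
Hypothesis T_mull : forall x y, T (mul x y) = mul x (T y).
Local Notation s := (T r 0 (ridx n)).

Lemma centroid_r_hcoord j : T r 0 (hidx j) = 0.
Proof.
move: j; apply: hr_free => //.
rewrite -eacp_mul_rl -T_mull eacp_mul_rl big1 ?linear0 // => i _.
by rewrite bvec_rh scale0r.
Qed.

Lemma centroid_h_rcoord i : (0 < n)%N -> T (h i) 0 (ridx n) = 0.
Proof.
move=> n_gt0; pose i0 : 'I_n := Ordinal n_gt0.
have : T (h i) 0 (ridx n) *: hr a b i0 = 0.
  by rewrite -eacp_mul_hl -T_mull eacp_mul_hl bvec_hr scale0r linear0.
by move/eqP; rewrite scaler_eq0 (negbTE (hr_neq0 _ two_neq0 deta_neq0)) orbF => /eqP.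
Qed.

Lemma centroid_hr i : T (hr a b i) = s *: hr a b i.
Proof. by rewrite -{1}[hr a b i]scale1r -bvec_rr -eacp_mul_hl T_mull eacp_mul_hl. Qed.

Lemma centroid_h_hcoord i j : T (h i) 0 (hidx j) = s * (j == i)%:R.
Proof.
apply/eqP; rewrite -subr_eq0; apply/eqP; move: j.
apply: (@hr_free (fun j => T (h i) 0 (hidx j) - s * (j == i)%:R)) => //.
under eq_bigr do rewrite scalerBl -scalerA.
rewrite sumrB -scaler_sumr sum_delta_scale -eacp_mul_rl -T_mull eacp_mul_rl.
under eq_bigr do rewrite bvec_hh.
by rewrite sum_delta_scale centroid_hr subrr.
Qed.

Lemma centroid_bvec k : (0 < n)%N -> T (bvec K k) = s *: bvec K k.
Proof.
move=> n_gt0; apply/rowP => l; rewrite mxE.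
case: (unliftP (ridx n) k) => [i ->|->]; case: (unliftP (ridx n) l) => [j ->|->].
- by rewrite centroid_h_hcoord bvec_hh.
- by rewrite centroid_h_rcoord // bvec_hr mulr0.
- by rewrite centroid_r_hcoord bvec_rh mulr0.
- by rewrite bvec_rr mulr1.
Qed.

End LeftCentroid.
End EACPProducts.

Theorem mainTheorem12 (K : fieldType) (n : nat) (a : 'M[K]_n) (b : 'rV[K]_n) :
  (2%:R : K) != 0 -> (0 < n)%N -> \det a != 0 ->
  forall T : {linear 'rV[K]_n.+1 -> 'rV[K]_n.+1},
    (forall x y, T (eacp_mul a b x y) = eacp_mul a b x (T y)) ->
    (forall x y, T (eacp_mul a b y x) = eacp_mul a b (T y) x) ->
    exists c : K, forall v, T v = c *: v.
Proof.
move=> two_neq0 n_gt0 deta_neq0 T T_mull _.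
exists (T (bvec K (ridx n)) 0 (ridx n)).
apply: linear_scalar_on_basis => k.
exact: (@centroid_bvec K n a b two_neq0 deta_neq0 T T_mull k n_gt0).
Qed.
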